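(* Let $\Theta=((\lambda_a)_{a\in A_1},(\mu_a)_{a\in A_2},(\gamma_a)_{a\in A_3})$ be a tuple of partitions of multidegree $\bar r=(r_a)_{a\in A}$ (so $|\lambda_a|=r_a$ for $a\in A_1$, $|\mu_a|=r_a$ for $a\in A_2$, $|\gamma_a|=r_a$ for $a\in A_3$). If $\mathrm{Hom}_{H(\mathbf t)}(\Lambda_2(\Theta),\Lambda_1(\Theta))\neq0$, then $r_2=r_3$, where $r_2=\sum_{a\in A_2}r_a=|\mu_{A_2}|$ and $r_3=\sum_{a\in A_3}r_a=|\gamma_{A_3}|$. Moreover: (1) for every $i\in V_{ord}$, $\sum_{a\in A,\,t(a)=i}r_a=\sum_{a\in A,\,i(a)=i}r_a$; (2) for every $q\in\Omega$, $\sum_{a\in A,\,t(a)=i_q}r_a+\sum_{a\in A,\,i(a)=j_q}r_a=\sum_{a\in A,\,i(a)=i_q}r_a+\sum_{a\in A,\,t(a)=j_q}r_a$.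
   Context: $K$ is an algebraically closed field. $Q=(V,A,i,t)$ is a quiver ($i(a),t(a)$ origin and end of $a$) with partition $V=V_{ord}\sqcup\bigsqcup_{q\in\Omega}V_q$, $V_q=\{i_q,j_q\}$, and dimension vector $\mathbf d$ with $d_{i_q}=d_{j_q}=:d_q$. $E_i$ is a $K$-space of dimension $d_i$, identified with $K^{d_q}$ for $i\in V_q$; $W_i=E_i^*$ if $i=j_q$ for some $q$, else $W_i=E_i$. $H(\mathbf t)=\prod_{i\in V_{ord}}GL(E_i)\times\prod_{q\in\Omega}GL(d_q)$, where $GL(d_q)$ acts naturally on both $E_{i_q}=E_{j_q}=K^{d_q}$; it acts diagonally on tensor products. Standing assumption: there is no arrow $a$ with $W_{i(a)}=E_{i(a)}^*$ and $W_{t(a)}=E_{t(a)}^*$, so $A=A_1\sqcup A_2\sqcup A_3$ with $A_1=\{a: W_{i(a)}=E_{i(a)},W_{t(a)}=E_{t(a)}\}$, $A_2=\{a: W_{i(a)}=E_{i(a)},W_{t(a)}=E_{t(a)}^*\}$, $A_3=\{a: W_{i(a)}=E_{i(a)}^*,W_{t(a)}=E_{t(a)}\}$. A partition is a nonincreasing tuple of nonnegative integers; for $\lambda=(\lambda_1,\dots,\lambda_s)$, $\Lambda^\lambda(E)=\Lambda^{\lambda_1}(E)\otimes\cdots\otimes\Lambda^{\lambda_s}(E)$. Define $\Lambda_1(\Theta)=\bigotimes_{a\in A_1}\Lambda^{\lambda_a}(E_{i(a)})\otimes\bigotimes_{a\in A_2}\big(\Lambda^{\mu_a}(E_{t(a)})\otimes\Lambda^{\mu_a}(E_{i(a)})\big)$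 and $\Lambda_2(\Theta)=\bigotimes_{a\in A_1}\Lambda^{\lambda_a}(E_{t(a)})\otimes\bigotimes_{a\in A_3}\big(\Lambda^{\gamma_a}(E_{t(a)})\otimes\Lambda^{\gamma_a}(E_{i(a)})\big)$, as $H(\mathbf t)$-modules. *)

From HB Require Import structures.
From mathcomp Require Import all_boot all_order all_algebra.
Set Implicit Arguments. Unset Strict Implicit. Unset Printing Implicit Defensive.
Import GRing.Theory.

(* Basis of Lambda^k(K^n): k-subsets of 'I_n (increasing wedge products). *)
Definition ksub (n k : nat) := {S : {set 'I_n} | #|S| == k}.

(* The (S,T) minor of M: determinant of the submatrix with rows S and
   columns T, both listed in increasing order. This is the matrix entry
   of Lambda^k(M) in the wedge basis. *)
Definition minor (K : fieldType) (n : nat) (M : 'M[K]_n) (k : nat)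
    (S T : {set 'I_n}) : K :=
  \det (\matrix_(a < k, b < k)
     match nth None [seq Some i | i <- enum S] a,
           nth None [seq Some j | j <- enum T] b with
     | Some i, Some j => M i j
     | _, _ => 0%R
     end).

(* A tensor product of exterior powers is given by a list of factors
   (v, k), meaning Lambda^k(E_v), E_v = K^(d v). *)
Definition tidx (V : finType) (d : V -> nat) (s : seq (V * nat)) :=
  {dffun forall i : 'I_(size s),
     ksub (d (tnth (in_tuple s) i).1) (tnth (in_tuple s) i).2}.

(* Matrix of the action of g = (g_v)_v on the tensor product (Kronecker
   product of the exterior-power matrices). *)
Definition trep (K : fieldType) (V : finType) (d : V -> nat)
    (s : seq (V * nat)) (g : forall v : V, 'M[K]_(d v)) (x y : tidx d s) : K :=
  (\prod_(i < size s)
     minor (g (tnth (in_tuple s) i).1) (tnth (in_tuple s) i).2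
           (val (x i)) (val (y i)))%R.

(* Hom_H(M2, M1) <> 0, where H is given as a predicate on tuples g:
   there is a nonzero linear map phi : M2 -> M1 (matrix indexed by
   (basis of M1) x (basis of M2)) with phi rho2(g) = rho1(g) phi. *)
Definition hom_nonzero (K : fieldType) (V : finType) (d : V -> nat)
    (s2 s1 : seq (V * nat)) (H : (forall v : V, 'M[K]_(d v)) -> Prop) : Prop :=
  exists phi : tidx d s1 -> tidx d s2 -> K,
    (exists x y, phi x y != 0%R) /\
    forall g, H g -> forall (x : tidx d s1) (z : tidx d s2),
      (\sum_(y : tidx d s2) phi x y * trep g y z
       = \sum_(y : tidx d s1) trep g x y * phi y z)%R.

Definition inH (K : comUnitRingType) (V Omega : finType) (iq jq : Omega -> V)
    (d : V -> nat) (hd : forall q, d (iq q) = d (jq q))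
    (g : forall v : V, 'M[K]_(d v)) : Prop :=
  (forall v, g v \in unitmx) /\
  (forall q, castmx (hd q, hd q) (g (iq q)) = g (jq q)).

(* W_v = E_v^*  iff  v = j_q for some q. *)
Definition isdual (V Omega : finType) (jq : Omega -> V) (v : V) : bool :=
  [exists q, jq q == v].

Definition isord (V Omega : finType) (iq jq : Omega -> V) (v : V) : bool :=
  ~~ [exists q, (iq q == v) || (jq q == v)].

Definition inA1 (V A Omega : finType) (src tgt : A -> V) (jq : Omega -> V)
  (a : A) : bool := ~~ isdual jq (src a) && ~~ isdual jq (tgt a).
Definition inA2 (V A Omega : finType) (src tgt : A -> V) (jq : Omega -> V)
  (a : A) : bool := ~~ isdual jq (src a) && isdual jq (tgt a).
Definition inA3 (V A Omega : finType) (src tgt : A -> V) (jq : Omega -> V)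
  (a : A) : bool := isdual jq (src a) && ~~ isdual jq (tgt a).

(* Lambda^lambda(E_v) as a list of factors. *)
Definition lamf (V : finType) (v : V) (p : seq nat) : seq (V * nat) :=
  [seq (v, k) | k <- p].

(* Lambda_1(Theta) and Lambda_2(Theta); part a is lambda_a, mu_a or gamma_a
   according to the class of a. *)
Definition Lam1 (V A Omega : finType) (src tgt : A -> V) (jq : Omega -> V)
    (part : A -> seq nat) : seq (V * nat) :=
  flatten [seq (if inA1 src tgt jq a then lamf (src a) (part a)
                else if inA2 src tgt jq a then
                  lamf (tgt a) (part a) ++ lamf (src a) (part a)
                else [::]) | a <- enum A].

Definition Lam2 (V A Omega : finType) (src tgt : A -> V) (jq : Omega -> V)
    (part : A -> seq nat) : seq (V * nat) :=
  flatten [seq (if inA1 src tgt jq a then lamf (tgt a) (part a)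
                else if inA3 src tgt jq a then
                  lamf (tgt a) (part a) ++ lamf (src a) (part a)
                else [::]) | a <- enum A].

Definition is_partition (p : seq nat) : bool := sorted geq p.

From HB Require Import structures.
From mathcomp Require Import all_boot all_order all_algebra zify.

(* A tuple of scalar matrices g_v = t_v 1 lies in H(t) as soon as
   t_(i_q) = t_(j_q), and it acts on a tensor product of exterior powers
   Lambda^k(E_v) by the scalar prod t_v^k.  A nonzero intertwiner forces these
   scalars to agree on Lambda_2(Theta) and Lambda_1(Theta).  Taking t_v = u on a
   set G of vertices closed under i_q <-> j_q and t_v = 1 elsewhere, and letting
   u range over the infinite field K, the total degrees carried by G in the two
   modules coincide.  The choices G = V, G = {i} and G = {i_q, j_q} give the
   three identities. *)

Set Implicit Arguments.
Unset Strict Implicit.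
Unset Printing Implicit Defensive.
Import GRing.Theory.

Definition deg_on (V : finType) (G : pred V) (s : seq (V * nat)) : nat :=
  \sum_(p <- s | G p.1) p.2.

Local Open Scope ring_scope.

Lemma closed_exists_not_unity_root (K : closedFieldType) (m : nat) :
  (0 < m)%N -> exists2 u : K, u != 0 & u ^+ m != 1.
Proof.
case: m => // m _.
have [u] := @GRing.solve_monicpoly K m.+2 (fun i => (i <= 1)%:R) isT.
rewrite 2!big_ord_recl big1 => [|i _]; last by rewrite mul0r.
rewrite /= !mul1r expr0 expr1 addr0 exprS => Eu.
exists u.
  by apply: contraPneq Eu => ->; rewrite mul0r addr0 => /esym/eqP; rewrite oner_eq0.
apply: contraPneq Eu => ->; rewrite mulr1 -[X in X = _]add0r => /addIr/esym/eqP.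
by rewrite oner_eq0.
Qed.

Lemma closed_exp_inj (K : closedFieldType) (a b : nat) :
  (forall u : K, u != 0 -> u ^+ a = u ^+ b) -> a = b.
Proof.
wlog le_ab : a b / (a <= b)%N.
  move=> W H; case: (leqP a b) => [/W|/ltnW/W]; first exact.
  by move=> ->// u /H.
move=> H; apply/eqP; rewrite eqn_leq le_ab leqNgt -subn_gt0 /=.
apply/negP => /(closed_exists_not_unity_root K) [u u_neq0]; apply/negP; rewrite negbK.
have := H u u_neq0; rewrite -{1}(subnKC le_ab) exprD -[X in X = _]mulr1.
by move/(mulfI (expf_neq0 a u_neq0)) => <-.
Qed.

Lemma nth_map_Some_mem (T : eqType) (s : seq T) (b : nat) (j : T) :
  nth None [seq Some i | i <- s] b = Some j -> j \in s.
Proof.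
elim: s b => [|x s IHs] [|b] //= => [[->]|/IHs]; first exact: mem_head.
by move=> j_s; rewrite inE j_s orbT.
Qed.

Lemma minor_scalar (K : fieldType) (n k : nat) (t : K) (S T : {set 'I_n}) :
  #|S| = k -> #|T| = k -> minor t%:M k S T = if S == T then t ^+ k else 0.
Proof.
move=> cardS cardT; have sizeS : size (enum S) = k by rewrite -cardE.
case: eqP => [<- | neqST].
  case: n S cardS sizeS {T cardT} => [|n] S cardS sizeS.
    suff -> : k = 0%N by rewrite expr0 [LHS]det_mx00.
    by apply/eqP; move: (max_card S); rewrite card_ord cardS leqn0.
  rewrite -(@det_scalar _ k t); congr (\det _); apply/matrixP => a b.
  rewrite !mxE !(nth_map ord0) ?sizeS // mxE.
  by rewrite nth_uniq ?sizeS ?enum_uniq.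
have [i iS iNT] : exists2 i, i \in S & i \notin T.
  apply/subsetPn; apply: contra_notN neqST => subST; apply/eqP.
  by rewrite eqEcard subST cardS cardT leqnn.
have ik : (index i (enum S) < k)%N by rewrite -sizeS index_mem mem_enum.
rewrite /minor (expand_det_row _ (Ordinal ik)) big1 // => j _.
rewrite !mxE /= (nth_map i) ?sizeS // nth_index ?mem_enum //.
case E: (nth None _ _) => [j'|]; last by rewrite mul0r.
rewrite mxE; case: eqP => [eq_ij' | _]; last by rewrite mul0r.
by move/nth_map_Some_mem: E; rewrite mem_enum -eq_ij' (negbTE iNT).
Qed.

Lemma trep_scalar (K : fieldType) (V : finType) (d : V -> nat)
    (s : seq (V * nat)) (t : V -> K) (x y : tidx d s) :
  trep (fun v => (t v)%:M) x y = if x == y then \prod_(p <- s) t p.1 ^+ p.2 else 0.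
Proof.
have card_val (z : tidx d s) i : #|val (z i)| = (tnth (in_tuple s) i).2.
  exact/eqP/(valP (z i)).
rewrite /trep; case: eqP => [<- | neq_xy].
  by rewrite big_tnth; apply: eq_bigr => i _; rewrite minor_scalar ?eqxx.
have [i neq_xy_i] : exists i, x i != y i.
  apply/existsP; apply: contra_notT neq_xy => /existsPn eq_xy.
  by apply/ffunP => i; apply/eqP/negPn/eq_xy.
have /negbTE neq_val : sval (x i) != sval (y i) := neq_xy_i.
by rewrite (bigD1 i) //= minor_scalar ?card_val // neq_val mul0r.
Qed.

Lemma castmx_scalar (R : pzRingType) (n m : nat) (e : n = m) (c : R) :
  castmx (e, e) (c%:M : 'M_n) = c%:M.
Proof. by case: m / e; rewrite castmx_id. Qed.

Lemma inH_scalar (K : comUnitRingType) (V Omega : finType) (iq jq : Omega -> V)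
    (d : V -> nat) (hd : forall q, d (iq q) = d (jq q)) (t : V -> K) :
    (forall v, t v \is a GRing.unit) -> (forall q, t (iq q) = t (jq q)) ->
  inH hd (fun v => (t v)%:M).
Proof.
move=> t_unit t_iq_jq; split=> [v | q]; last by rewrite castmx_scalar t_iq_jq.
by rewrite unitmxE det_scalar unitrX.
Qed.

Lemma hom_nonzero_scalar (K : fieldType) (V : finType) (d : V -> nat)
    (s2 s1 : seq (V * nat)) (H : (forall v : V, 'M[K]_(d v)) -> Prop)
    (t : V -> K) :
    H (fun v => (t v)%:M) -> hom_nonzero s2 s1 H ->
  \prod_(p <- s1) t p.1 ^+ p.2 = \prod_(p <- s2) t p.1 ^+ p.2.
Proof.
move=> Ht [phi [[x [z phi_xz_neq0]] intertwine]].
have := intertwine _ Ht x z.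
rewrite (bigD1 z) //= [X in _ + X = _]big1 => [|y /negbTE neq_yz]; last first.
  by rewrite trep_scalar neq_yz mulr0.
rewrite (bigD1 x) //= [X in _ = _ + X]big1 => [|y]; last first.
  by rewrite trep_scalar eq_sym => /negbTE->; rewrite mul0r.
by rewrite !addr0 !trep_scalar !eqxx mulrC => /(mulIf phi_xz_neq0) ->.
Qed.

Lemma prod_exp_deg_on (R : pzSemiRingType) (V : finType) (G : pred V) (u : R)
    (s : seq (V * nat)) :
  \prod_(p <- s) (if G p.1 then u else 1) ^+ p.2 = u ^+ deg_on G s.
Proof.
rewrite /deg_on -prodrXr [RHS]big_mkcond; apply: eq_bigr => p _.
by case: ifP; rewrite ?expr1n.
Qed.

Lemma hom_nonzero_deg_on (K : closedFieldType) (V Omega : finType)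
    (iq jq : Omega -> V) (d : V -> nat) (hd : forall q, d (iq q) = d (jq q))
    (s2 s1 : seq (V * nat)) (G : pred V) :
    hom_nonzero s2 s1 (@inH K V Omega iq jq d hd) ->
    (forall q, G (iq q) = G (jq q)) ->
  deg_on G s1 = deg_on G s2.
Proof.
move=> hom G_iq_jq; apply: (@closed_exp_inj K) => u u_neq0.
rewrite -!prod_exp_deg_on.
apply: (hom_nonzero_scalar (t := fun v => if G v then u else 1) _ hom).
apply: inH_scalar => [v | q]; last by rewrite G_iq_jq.
by case: (G v); rewrite ?unitr1 ?unitfE.
Qed.

Local Close Scope ring_scope.

Lemma deg_on_cat (V : finType) (G : pred V) (s1 s2 : seq (V * nat)) :
  deg_on G (s1 ++ s2) = deg_on G s1 + deg_on G s2.
Proof. exact: big_cat. Qed.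

Lemma deg_on_flatten (V : finType) (G : pred V) (ss : seq (seq (V * nat))) :
  deg_on G (flatten ss) = \sum_(s <- ss) deg_on G s.
Proof. exact: big_flatten. Qed.

Lemma deg_on_lamf (V : finType) (G : pred V) (v : V) (p : seq nat) :
  deg_on G (lamf v p) = if G v then sumn p else 0.
Proof.
rewrite /deg_on big_map /=; case: (G v); last by rewrite big_pred0.
by rewrite sumnE.
Qed.

Section QuiverDegrees.

Variables (V A Omega : finType) (src tgt : A -> V) (iq jq : Omega -> V).
Variables (part : A -> seq nat) (r : A -> nat).
Hypothesis no_dual_arc : forall a, ~~ (isdual jq (src a) && isdual jq (tgt a)).
Hypothesis sumn_part : forall a, sumn (part a) = r a.

Local Notation dual := (isdual jq).
Local Notation Lam1 := (Lam1 src tgt jq part).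
Local Notation Lam2 := (Lam2 src tgt jq part).

(* A source occurrence lands in Lambda_1 iff it is not dual, a target
   occurrence iff it is dual; Lambda_2 takes the complementary occurrences. *)
Lemma deg_on_Lam1 (G : pred V) :
  deg_on G Lam1 = \sum_(a | G (src a) && ~~ dual (src a)) r a
                   + \sum_(a | G (tgt a) && dual (tgt a)) r a.
Proof.
rewrite deg_on_flatten big_map big_enum !(big_mkcond (fun a => G _ && _)) -big_split /=.
apply: eq_bigr => a _; rewrite /inA1 /inA2.
move: (no_dual_arc a); case: (dual (src a)); case: (dual (tgt a)) => //= _.
- by rewrite /deg_on big_nil !andbF.
- by rewrite deg_on_cat !deg_on_lamf sumn_part !andbT addnC.
- by rewrite deg_on_lamf sumn_part !andbT andbF addn0.
Qed.

Lemma deg_on_Lam2 (G : pred V) :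
  deg_on G Lam2 = \sum_(a | G (src a) && dual (src a)) r a
                   + \sum_(a | G (tgt a) && ~~ dual (tgt a)) r a.
Proof.
rewrite deg_on_flatten big_map big_enum !(big_mkcond (fun a => G _ && _)) -big_split /=.
apply: eq_bigr => a _; rewrite /inA1 /inA3.
move: (no_dual_arc a); case: (dual (src a)); case: (dual (tgt a)) => //= _.
- by rewrite deg_on_cat !deg_on_lamf sumn_part !andbT addnC.
- by rewrite /deg_on big_nil !andbF.
- by rewrite deg_on_lamf sumn_part !andbT andbF.
Qed.

Hypothesis deg_on_Lam_eq : forall G : pred V,
  (forall q, G (iq q) = G (jq q)) -> deg_on G Lam1 = deg_on G Lam2.

Lemma sum_inA2_eq_sum_inA3 :
  \sum_(a | inA2 src tgt jq a) r a = \sum_(a | inA3 src tgt jq a) r a.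
Proof.
have split_src : \sum_(a | ~~ dual (src a)) r a
    = \sum_(a | inA1 src tgt jq a) r a + \sum_(a | inA2 src tgt jq a) r a.
  by rewrite (bigID (fun a => dual (tgt a))) addnC.
have split_tgt : \sum_(a | ~~ dual (tgt a)) r a
    = \sum_(a | inA1 src tgt jq a) r a + \sum_(a | inA3 src tgt jq a) r a.
  rewrite (bigID (fun a => dual (src a))) addnC.
  by congr (_ + _); apply: eq_bigl => a; rewrite andbC.
have dual_tgt : \sum_(a | dual (tgt a)) r a = \sum_(a | inA2 src tgt jq a) r a.
  apply: eq_bigl => a; rewrite /inA2.
  by move: (no_dual_arc a); case: (dual (src a)); case: (dual (tgt a)).
have dual_src : \sum_(a | dual (src a)) r a = \sum_(a | inA3 src tgt jq a) r a.
  apply: eq_bigl => a; rewrite /inA3.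
  by move: (no_dual_arc a); case: (dual (src a)); case: (dual (tgt a)).
have := deg_on_Lam_eq (G := predT) (fun _ => erefl).
rewrite deg_on_Lam1 deg_on_Lam2 /= split_src split_tgt dual_tgt dual_src.
lia.
Qed.

Lemma ord_vertex_balanced (v : V) : isord iq jq v ->
  \sum_(a | tgt a == v) r a = \sum_(a | src a == v) r a.
Proof.
move=> /existsPn v_ord.
have v_not_dual : dual v = false.
  by apply/existsPn => q; apply: contraNN (v_ord q) => ->; rewrite orbT.
have nondual_at_v (f : A -> V) :
    \sum_(a | (f a == v) && ~~ dual (f a)) r a = \sum_(a | f a == v) r a.
  by apply: eq_bigl => a; case: eqP => // ->; rewrite v_not_dual.
have dual_at_v (f : A -> V) : \sum_(a | (f a == v) && dual (f a)) r a = 0.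
  by rewrite big_pred0 // => a; case: eqP => // ->; rewrite v_not_dual.
have G_v q : pred1 v (iq q) = pred1 v (jq q).
  by move: (v_ord q); rewrite /=; case: (iq q == v); case: (jq q == v).
have := deg_on_Lam_eq G_v.
by rewrite deg_on_Lam1 deg_on_Lam2 !nondual_at_v !dual_at_v addn0 => ->.
Qed.

Hypothesis iq_inj : injective iq.
Hypothesis jq_inj : injective jq.
Hypothesis iq_neq_jq : forall q q', iq q != jq q'.

Lemma paired_vertices_balanced (q : Omega) :
  \sum_(a | tgt a == iq q) r a + \sum_(a | src a == jq q) r a
   = \sum_(a | src a == iq q) r a + \sum_(a | tgt a == jq q) r a.
Proof.
pose G w := (w == iq q) || (w == jq q).
have G_pair q' : G (iq q') = G (jq q').
  rewrite /G (inj_eq iq_inj) (inj_eq jq_inj) ![_ == jq _]eq_sym ![jq _ == iq _]eq_sym.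
  by rewrite !(negbTE (iq_neq_jq _ _)) orbF.
have iq_not_dual : dual (iq q) = false.
  by apply/existsPn => q'; rewrite eq_sym iq_neq_jq.
have jq_dual : dual (jq q) by apply/existsP; exists q.
have G_nondual w : G w && ~~ dual w = (w == iq q).
  rewrite /G; case: (eqVneq w (iq q)) => [-> | _]; first by rewrite iq_not_dual.
  by case: eqP => // ->; rewrite jq_dual.
have G_dual w : G w && dual w = (w == jq q).
  rewrite /G; case: (eqVneq w (jq q)) => [-> | _]; first by rewrite jq_dual orbT.
  by case: eqP => // ->; rewrite iq_not_dual.
have := deg_on_Lam_eq G_pair.
rewrite deg_on_Lam1 deg_on_Lam2.
rewrite !(eq_bigl _ _ (fun=> G_nondual _)) !(eq_bigl _ _ (fun=> G_dual _)).
by move=> ->; rewrite addnC.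
Qed.

End QuiverDegrees.

Theorem lemma2p2 (K : closedFieldType) (V A Omega : finType)
  (src tgt : A -> V) (iq jq : Omega -> V) (d : V -> nat)
  (hiq : injective iq) (hjq : injective jq)
  (hij : forall q q' : Omega, iq q != jq q')
  (hd : forall q : Omega, d (iq q) = d (jq q))
  (hA : forall a : A, ~~ (isdual jq (src a) && isdual jq (tgt a)))
  (part : A -> seq nat) (r : A -> nat)
  (hpart : forall a : A, is_partition (part a))
  (hr : forall a : A, sumn (part a) = r a)
  (hom : hom_nonzero (Lam2 src tgt jq part) (Lam1 src tgt jq part)
           (@inH K V Omega iq jq d hd)) :
  [/\ \sum_(a | inA2 src tgt jq a) r a = \sum_(a | inA3 src tgt jq a) r a,
      (forall v : V, isord iq jq v ->
         \sum_(a | tgt a == v) r a = \sum_(a | src a == v) r a)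
    & (forall q : Omega,
         \sum_(a | tgt a == iq q) r a + \sum_(a | src a == jq q) r a
         = \sum_(a | src a == iq q) r a + \sum_(a | tgt a == jq q) r a)].
Proof.
have deg_eq G := @hom_nonzero_deg_on K V Omega iq jq d hd _ _ G hom.
split.
- exact: sum_inA2_eq_sum_inA3 hA hr deg_eq.
- exact: ord_vertex_balanced hA hr deg_eq.
- exact: paired_vertices_balanced hA hr deg_eq hiq hjq hij.
Qed.
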